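(* Let $(M_i)_{i\in I}$ be a family of objects of an abelian category $\mathcal{A}$. (1) Assume that the product $\prod_{i\in I} M_i$ exists and is a strongly self-Rickart object. Then $M_i$ is strongly $M_j$-Rickart for every $i,j\in I$. (2) Assume that the coproduct $\bigoplus_{i\in I} M_i$ exists and is a dual strongly self-Rickart object. Then $M_i$ is dual strongly $M_j$-Rickart for every $i,j\in I$.
   Context: A morphism $f:X\to Y$ is a section if $f'f=1_X$ for some $f'$, a retraction if $ff'=1_Y$ for some $f'$. A monomorphism $k:K\to X$ is fully invariant if for every $h:X\to X$ there is $\alpha:K\to K$ with $hk=k\alpha$; an epimorphism $c:X\to C$ is fully coinvariant if for every $h:X\to X$ there is $\gamma:C\to C$ with $ch=\gamma c$. For objects $M,N$: $N$ is strongly $M$-Rickart if the kernel of every morphism $f:M\to N$ is a fully invariant section; $N$ is dual strongly $M$-Rickart if the cokernel of every morphism $f:M\to N$ is a fully coinvariant retraction. An object is (dual) strongly self-Rickart if it is (dual) strongly Rickart relative to itself. *)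

From HB Require Import structures.
From mathcomp Require Import all_boot all_algebra.
Set Implicit Arguments. Unset Strict Implicit. Unset Printing Implicit Defensive.
Import GRing.Theory.
Local Open Scope ring_scope.

Record AbelianCategory := {
  Obj :> Type;
  Mor : Obj -> Obj -> zmodType;
  comp : forall X Y Z : Obj, Mor Y Z -> Mor X Y -> Mor X Z;
  idm : forall X : Obj, Mor X X;
  compA : forall (W X Y Z : Obj) (h : Mor Y Z) (g : Mor X Y) (f : Mor W X),
      comp h (comp g f) = comp (comp h g) f;
  comp1m : forall (X Y : Obj) (f : Mor X Y), comp (idm Y) f = f;
  compm1 : forall (X Y : Obj) (f : Mor X Y), comp f (idm X) = f;
  compDl : forall (X Y Z : Obj) (g1 g2 : Mor Y Z) (f : Mor X Y),
      comp (g1 + g2) f = comp g1 f + comp g2 f;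
  compDr : forall (X Y Z : Obj) (g : Mor Y Z) (f1 f2 : Mor X Y),
      comp g (f1 + f2) = comp g f1 + comp g f2;
  zero_obj : exists Z : Obj, idm Z = 0;
  biprod : forall X Y : Obj, exists (P : Obj) (i1 : Mor X P) (i2 : Mor Y P)
      (p1 : Mor P X) (p2 : Mor P Y),
      [/\ comp p1 i1 = idm X, comp p2 i2 = idm Y, comp p1 i2 = 0,
          comp p2 i1 = 0 & comp i1 p1 + comp i2 p2 = idm P];
  has_kernels : forall (X Y : Obj) (f : Mor X Y),
      exists (K : Obj) (k : Mor K X), comp f k = 0 /\
        forall (W : Obj) (g : Mor W X), comp f g = 0 ->
          exists! u : Mor W K, comp k u = g;
  has_cokernels : forall (X Y : Obj) (f : Mor X Y),
      exists (C : Obj) (c : Mor Y C), comp c f = 0 /\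
        forall (W : Obj) (g : Mor Y W), comp g f = 0 ->
          exists! u : Mor C W, comp u c = g;
  mono_is_kernel : forall (X Y : Obj) (m : Mor X Y),
      (forall (W : Obj) (g h : Mor W X), comp m g = comp m h -> g = h) ->
      exists (Z : Obj) (f : Mor Y Z), comp f m = 0 /\
        forall (W : Obj) (g : Mor W Y), comp f g = 0 ->
          exists! u : Mor W X, comp m u = g;
  epi_is_cokernel : forall (X Y : Obj) (e : Mor X Y),
      (forall (W : Obj) (g h : Mor Y W), comp g e = comp h e -> g = h) ->
      exists (Z : Obj) (f : Mor Z X), comp e f = 0 /\
        forall (W : Obj) (g : Mor X W), comp g f = 0 ->
          exists! u : Mor Y W, comp u e = g
}.

Arguments comp {a X Y Z} g f.
Arguments idm {a} X.

Section Defs.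
Variable A : AbelianCategory.

Definition is_mono (X Y : A) (m : Mor X Y) : Prop :=
  forall (W : A) (g h : Mor W X), comp m g = comp m h -> g = h.

Definition is_epi (X Y : A) (e : Mor X Y) : Prop :=
  forall (W : A) (g h : Mor Y W), comp g e = comp h e -> g = h.

Definition is_section (X Y : A) (f : Mor X Y) : Prop :=
  exists f' : Mor Y X, comp f' f = idm X.

Definition is_retraction (X Y : A) (f : Mor X Y) : Prop :=
  exists f' : Mor Y X, comp f f' = idm Y.

Definition is_kernel (X Y K : A) (f : Mor X Y) (k : Mor K X) : Prop :=
  comp f k = 0 /\
  forall (W : A) (g : Mor W X), comp f g = 0 -> exists! u : Mor W K, comp k u = g.

Definition is_cokernel (X Y C : A) (f : Mor X Y) (c : Mor Y C) : Prop :=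
  comp c f = 0 /\
  forall (W : A) (g : Mor Y W), comp g f = 0 -> exists! u : Mor C W, comp u c = g.

Definition fully_invariant (K X : A) (k : Mor K X) : Prop :=
  is_mono k /\ forall h : Mor X X, exists alpha : Mor K K, comp h k = comp k alpha.

Definition fully_coinvariant (X C : A) (c : Mor X C) : Prop :=
  is_epi c /\ forall h : Mor X X, exists gamma : Mor C C, comp c h = comp gamma c.

(** [N] is strongly [M]-Rickart. *)
Definition strongly_rickart (M N : A) : Prop :=
  forall (f : Mor M N) (K : A) (k : Mor K M),
    is_kernel f k -> fully_invariant k /\ is_section k.

(** [N] is dual strongly [M]-Rickart. *)
Definition dual_strongly_rickart (M N : A) : Prop :=
  forall (f : Mor M N) (C : A) (c : Mor N C),
    is_cokernel f c -> fully_coinvariant c /\ is_retraction c.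

Definition strongly_self_rickart (M : A) : Prop := strongly_rickart M M.
Definition dual_strongly_self_rickart (M : A) : Prop := dual_strongly_rickart M M.

Definition is_product (I : Type) (Mi : I -> A) (P : A) (p : forall i, Mor P (Mi i)) : Prop :=
  forall (W : A) (g : forall i, Mor W (Mi i)),
    exists! u : Mor W P, forall i, comp (p i) u = g i.

Definition is_coproduct (I : Type) (Mi : I -> A) (S : A) (e : forall i, Mor (Mi i) S) : Prop :=
  forall (W : A) (g : forall i, Mor (Mi i) W),
    exists! u : Mor S W, forall i, comp u (e i) = g i.

End Defs.

Arguments is_product {A I} Mi P p.
Arguments is_coproduct {A I} Mi S e.

(** Each [M i] is a retract of the product, through the morphism whose
    components are the identity at [i] and zero elsewhere, and the strong
    Rickart property descends to retracts: the kernel of [f : M j -> M i] is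
    cut out of the kernel of the endomorphism [e_i o f o p_j] of the product,
    which is a fully invariant section by hypothesis.  The statement about
    coproducts is the one about products in the opposite category. *)
From Pilot Require Import Defs.
From mathcomp Require Import all_boot all_algebra.
From Stdlib Require Import ClassicalEpsilon ProofIrrelevance.
(* Re-import so that [comp] is the categorical composition, not ssrfun's. *)
Import Defs GRing.Theory.
Set Implicit Arguments. Unset Strict Implicit. Unset Printing Implicit Defensive.
Local Open Scope ring_scope.

Section Kernels.
Variable A : AbelianCategory.

Lemma compm0 (X Y Z : A) (g : Mor Y Z) : comp g (0 : Mor X Y) = 0.
Proof. by apply: (addrI (comp g 0)); rewrite -compDr !addr0. Qed.

Lemma comp0m (X Y Z : A) (f : Mor X Y) : comp (0 : Mor Y Z) f = 0.
Proof. by apply: (addrI (comp 0 f)); rewrite -compDl !addr0. Qed.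

Variables (X Y K : A) (f : Mor X Y) (k : Mor K X).
Hypothesis kerk : is_kernel f k.

Lemma kernel_factor (W : A) (g : Mor W X) :
  comp f g = 0 -> exists u : Mor W K, comp k u = g.
Proof. by case: kerk => _ /[apply] -[u [ku _]]; exists u. Qed.

Lemma kernel_mono : is_mono k.
Proof.
move=> W g h kgh; have [_ /(_ W (comp k g))] := kerk.
case=> [|u [_ uniq_u]]; first by rewrite compA kerk.1 comp0m.
by rewrite -(uniq_u g erefl) (uniq_u h (esym kgh)).
Qed.

End Kernels.

Section Retract.
Variables (A : AbelianCategory) (M M' N N' : A).
Variables (s : Mor M' M) (r : Mor M M') (t : Mor N' N) (q : Mor N N').
Hypotheses (rs : comp r s = idm M') (qt : comp q t = idm N').
Variables (f : Mor M' N') (K K' : A) (k : Mor K M') (L : Mor K' M).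
Hypotheses (kerk : is_kernel f k) (kerL : is_kernel (comp t (comp f r)) L).

Lemma retract_comp_eq0 (W : A) (g : Mor W M) :
  comp (comp t (comp f r)) g = 0 -> comp f (comp r g) = 0.
Proof.
by move=> Fg0; rewrite -[LHS]comp1m -qt -compA (compA f) (compA t) Fg0 compm0.
Qed.

Lemma kernel_lift_to_retract : exists u : Mor K K', comp L u = comp s k.
Proof.
apply: (kernel_factor kerL).
by rewrite -!compA (compA r) rs comp1m kerk.1 !compm0.
Qed.

Lemma retract_kernel_fully_invariant : fully_invariant L -> fully_invariant k.
Proof.
move=> [_ invL]; split; first exact: kernel_mono kerk.
move=> h; suff [alpha kalpha] : exists alpha, comp k alpha = comp h k by exists alpha.
apply: (kernel_factor kerk).
have [u Lu] := kernel_lift_to_retract.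
have [beta Hbeta] := invL (comp s (comp h r)).
have Fhk : comp (comp t (comp f r)) (comp (comp s (comp h r)) (comp s k)) = 0.
  by rewrite -Lu (compA _ L) Hbeta -(compA L) (compA _ L) kerL.1 comp0m.
have := retract_comp_eq0 Fhk.
by rewrite -!compA (compA r) rs comp1m (compA r) rs comp1m.
Qed.

Lemma retract_kernel_section : is_section L -> is_section k.
Proof.
move=> [rho rhoL]; have [u Lu] := kernel_lift_to_retract.
have [v kv] := kernel_factor kerk (retract_comp_eq0 kerL.1).
exists (comp v (comp rho s)); apply: (kernel_mono kerk).
rewrite compm1 !compA kv -!compA -Lu (compA rho) rhoL comp1m Lu (compA r) rs.
exact: comp1m.
Qed.

End Retract.

Lemma strongly_rickart_retract (A : AbelianCategory) (M M' N N' : A)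
    (s : Mor M' M) (r : Mor M M') (t : Mor N' N) (q : Mor N N') :
  comp r s = idm M' -> comp q t = idm N' ->
  strongly_rickart M N -> strongly_rickart M' N'.
Proof.
move=> rs qt srMN f K k kerk.
have [K' [L kerL]] := has_kernels (comp t (comp f r)).
have [invL secL] := srMN _ _ _ kerL.
split; [exact (retract_kernel_fully_invariant rs qt kerk kerL invL) |
        exact (retract_kernel_section rs qt kerk kerL secL)].
Qed.

Section Product.
Variables (A : AbelianCategory) (I : Type) (M : I -> A).

Definition delta (i l : I) : Mor (M i) (M l) :=
  match excluded_middle_informative (i = l) with
  | left e => eq_rect i (fun l => Mor (M i) (M l)) (idm (M i)) l e
  | right _ => 0
  end.

Lemma delta_id (i : I) : delta i i = idm (M i).
Proof.
rewrite /delta; case: excluded_middle_informative => [e|]; last by [].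
by rewrite (proof_irrelevance _ e erefl).
Qed.

Lemma product_proj_retraction (P : A) (p : forall i, Mor P (M i)) :
  is_product M P p -> forall i, exists e : Mor (M i) P, comp (p i) e = idm (M i).
Proof.
move=> prodP i; have [e [pe _]] := prodP _ (delta i).
by exists e; rewrite pe delta_id.
Qed.

Lemma strongly_rickart_of_product (P : A) (p : forall i, Mor P (M i)) :
  is_product M P p -> strongly_self_rickart P ->
  forall i j : I, strongly_rickart (M j) (M i).
Proof.
move=> prodP srP i j.
have [ei pei] := product_proj_retraction prodP i.
have [ej pej] := product_proj_retraction prodP j.
exact: strongly_rickart_retract pej pei srP.
Qed.

End Product.

Section Opposite.
Variable A : AbelianCategory.

Definition opposite : AbelianCategory.
Proof.
refine {| Obj := A; Mor X Y := Mor Y X; comp X Y Z g f := comp f g;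
          idm := @idm A |}.
- by move=> W X Y Z h g f; rewrite compA.
- by move=> X Y f; apply: compm1.
- by move=> X Y f; apply: comp1m.
- by move=> X Y Z g1 g2 f; rewrite compDr.
- by move=> X Y Z g f1 f2; rewrite compDl.
- exact: zero_obj.
- move=> X Y; have [P [i1 [i2 [p1 [p2 [? ? ? ? ?]]]]]] := biprod X Y.
  by exists P, p1, p2, i1, i2; split.
- by move=> X Y f; apply: has_cokernels.
- by move=> X Y f; apply: has_kernels.
- by move=> X Y m; apply: epi_is_cokernel.
- by move=> X Y m; apply: mono_is_kernel.
Defined.

Lemma is_coproduct_opposite (I : Type) (Mi : I -> A) (S : A)
    (e : forall i, Mor (Mi i) S) :
  is_coproduct Mi S e <-> @is_product opposite I Mi S e.
Proof. by []. Qed.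

Lemma dual_strongly_rickart_opposite (M N : A) :
  dual_strongly_rickart M N <-> @strongly_rickart opposite N M.
Proof. by []. Qed.

End Opposite.

Theorem proposition3p4 (A : AbelianCategory) (I : Type) (M : I -> A) :
  (forall (P : A) (p : forall i, Mor P (M i)),
     is_product M P p -> strongly_self_rickart P ->
     forall i j : I, strongly_rickart (M j) (M i)) /\
  (forall (S : A) (e : forall i, Mor (M i) S),
     is_coproduct M S e -> dual_strongly_self_rickart S ->
     forall i j : I, dual_strongly_rickart (M j) (M i)).
Proof.
split; first exact: strongly_rickart_of_product.
move=> S e /is_coproduct_opposite coprodS /dual_strongly_rickart_opposite dsrS i j.
apply/dual_strongly_rickart_opposite.
exact: strongly_rickart_of_product coprodS dsrS j i.
Qed.
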